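(* Assume (C1) and (C2). For all $u\in\mathcal{D}$ and all $s,t\ge0$, $$I(u)\ge I(su^++tu^-)+\frac{1-s^q}{q}\langle I'(u),u^+\rangle+\frac{1-t^q}{q}\langle I'(u),u^-\rangle+\Big(\frac{1-s^p}{p}-\frac{1-s^q}{q}\Big)\|u^+\|^p+\Big(\frac{1-t^p}{p}-\frac{1-t^q}{q}\Big)\|u^-\|^p+\sum_{n\in\mathbb{Z}}a(n)\sum_{i=1}^{\frac p2-1}\sum_{j=1}^{i-1}2^{i-j}\big|(\Delta u^+(n))^{p-(i+j)}(\Delta u^-(n))^{i+j}\big|\,\Theta_{i,j},$$ where $$\Theta_{i,j}=\frac{2s^pC_{\frac p2-1}^iC_i^j+s^pC_{\frac p2-1}^{i-1}C_{i-1}^j+2t^pC_{\frac p2-1}^{i-1}C_{i-1}^{j-1}+t^pC_{\frac p2-1}^{i-1}C_{i-1}^j-2s^{p-(i+j)}t^{i+j}C_{\frac p2}^iC_i^j}{2p}\ge0.$$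
   Context: Fix real numbers $p,q,r$ with $1<p<q$, $\frac p2$ a positive integer, and $r\ge1$, and functions $a,b,c:\mathbb{Z}\to(0,+\infty)$. Conditions: - (C1) There is $b_0>0$ with $b(n)\ge b_0$ for all $n$ and $b(n)\to+\infty$ as $|n|\to\infty$. - (C2) There is $c_0>0$ with $c(n)\le c_0$ for all $n$ and $\sum_n c(n)<+\infty$. Notation: - $C_n^k=\binom nk$ is the binomial coefficient. - For a real sequence $u=(u(n))_{n\in\mathbb{Z}}$: $\Delta u(n)=u(n+1)-u(n)$, $u^+(n)=\max\{u(n),0\}$, $u^-(n)=\min\{u(n),0\}$. Spaces: - $E$ is the set of real sequences $u$ with $\|u\|:=\big(\sum_n[a(n)|\Delta u(n)|^p+b(n)|u(n)|^p]\big)^{1/p}<\infty$. - $\mathcal{D}=\{u\in E:\sum_n c(n)|u(n)|^q\ln|u(n)|^r<+\infty\}$, where terms with $u(n)=0$ are read as $0$. For $u,v\in\mathcal{D}$: - $I(u)=\frac1p\|u\|^p+\frac{r}{q^2}\sum_n c(n)|u(n)|^q-\frac1q\sum_n c(n)|u(n)|^q\ln|u(n)|^r$. - $\langle I'(u),v\rangle=\sum_n[a(n)|\Delta u(n)|^{p-2}\Delta u(n)\Delta v(n)+b(n)|u(n)|^{p-2}u(n)v(n)]-\sum_n c(n)|u(n)|^{q-2}u(n)v(n)\ln|u(n)|^r$. *)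

From Stdlib Require Import Reals ZArith List.
From Coquelicot Require Import Coquelicot.
Open Scope R_scope.

(* |x|^y for x >= 0 and y > 0, with the convention 0^y = 0. *)
Definition rpow (x y : R) : R :=
  if Req_EM_T x 0 then 0 else Rpower x y.

(* Sums over Z: split into n >= 0 and n <= -1 halves. *)
Definition zsummable (f : Z -> R) : Prop :=
  ex_series (fun n : nat => Rabs (f (Z.of_nat n))) /\
  ex_series (fun n : nat => Rabs (f (- Z.of_nat (S n))%Z)).

Definition zsum (f : Z -> R) : R :=
  Series (fun n : nat => f (Z.of_nat n)) +
  Series (fun n : nat => f (- Z.of_nat (S n))%Z).

Definition lsum (l : list nat) (f : nat -> R) : R :=
  fold_right (fun i acc => f i + acc) 0 l.

(* binomial coefficient C_n^k (0 when k > n) *)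
Definition binom (n k : nat) : R :=
  if Nat.leb k n then Binomial.C n k else 0.

Definition fdiff (u : Z -> R) (n : Z) : R := u (n + 1)%Z - u n.
Definition posp (u : Z -> R) (n : Z) : R := Rmax (u n) 0.
Definition negp (u : Z -> R) (n : Z) : R := Rmin (u n) 0.

Definition normp_term (p : R) (a b : Z -> R) (u : Z -> R) (n : Z) : R :=
  a n * rpow (Rabs (fdiff u n)) p + b n * rpow (Rabs (u n)) p.

Definition inE (p : R) (a b : Z -> R) (u : Z -> R) : Prop :=
  zsummable (normp_term p a b u).

Definition normE (p : R) (a b : Z -> R) (u : Z -> R) : R :=
  rpow (zsum (normp_term p a b u)) (/ p).

Definition logterm (q r : R) (c : Z -> R) (u : Z -> R) (n : Z) : R :=
  if Req_EM_T (u n) 0 then 0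
  else c n * rpow (Rabs (u n)) q * ln (rpow (Rabs (u n)) r).

Definition inD (p q r : R) (a b c : Z -> R) (u : Z -> R) : Prop :=
  inE p a b u /\ zsummable (logterm q r c u).

Definition Ifun (p q r : R) (a b c : Z -> R) (u : Z -> R) : R :=
  / p * rpow (normE p a b u) p
  + r / (q ^ 2) * zsum (fun n => c n * rpow (Rabs (u n)) q)
  - / q * zsum (logterm q r c u).

Definition dI (p q r : R) (a b c : Z -> R) (u v : Z -> R) : R :=
  zsum (fun n => a n * rpow (Rabs (fdiff u n)) (p - 2) * fdiff u n * fdiff v n
               + b n * rpow (Rabs (u n)) (p - 2) * u n * v n)
  - zsum (fun n => if Req_EM_T (u n) 0 then 0
                   else c n * rpow (Rabs (u n)) (q - 2) * u n * v n
                        * ln (rpow (Rabs (u n)) r)).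

(* Theta_{i,j}, with p = 2 m *)
Definition Theta (m : nat) (s t : R) (i j : nat) : R :=
  (2 * s ^ (2 * m)%nat * binom (m - 1)%nat i * binom i j
   + s ^ (2 * m)%nat * binom (m - 1)%nat (i - 1)%nat * binom (i - 1)%nat j
   + 2 * t ^ (2 * m)%nat * binom (m - 1)%nat (i - 1)%nat * binom (i - 1)%nat (j - 1)%nat
   + t ^ (2 * m)%nat * binom (m - 1)%nat (i - 1)%nat * binom (i - 1)%nat j
   - 2 * s ^ (2 * m - (i + j))%nat * t ^ (i + j)%nat * binom m i * binom i j)
  / (2 * (2 * INR m)).

From Stdlib Require Import Reals ZArith List Lia Lra.
From Coquelicot Require Import Coquelicot.
Open Scope R_scope.

(* Put [w = s u^+ + t u^-] and [p = 2 m].  Without its [Theta]-sum, the difference of the two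
   sides is a series over n of pointwise deficits, and each deficit splits into three parts.
   The c(n)-part is nonnegative because [x ln x >= x - 1].  The a(n)- and b(n)-parts are one
   homogeneous expression of degree p in (X, Y), X Y >= 0, evaluated at
   (Delta u^+(n), Delta u^-(n)) and at (u^+(n), u^-(n)).  Since (1 - s^q)/q <= (1 - s^p)/p,
   it is at least
     (1/p) [s^p (X+Y)^(p-1) X + t^p (X+Y)^(p-1) Y - (s X + t Y)^p]
       = (1/p) sum_k C(p,k) X^(p-k) Y^k g_k,
   where g_k = (1 - k/p) s^p + (k/p) t^p - s^(p-k) t^k >= 0 by weighted AM-GM.  Regrouping this
   sum along (1 + Z)^(2m) = (1 + 2Z + Z^2)^m produces the terms
   2^(i-j) X^(p-i-j) Y^(i+j) C(m,i) C(i,j) g_(i+j) / p = 2^(i-j) X^(p-i-j) Y^(i+j) Theta_(i,j),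
   and dropping all but those with 1 <= j < i < m gives the claim.  Every series involved is
   dominated by the two series defining u in D. *)

(** * Binomial sums *)

Lemma binom_n_0 n : binom n 0 = 1.
Proof. apply C_n_0. Qed.

Lemma binom_small n k : (n < k)%nat -> binom n k = 0.
Proof.
  intros H; unfold binom; replace (Nat.leb k n) with false; [reflexivity|].
  symmetry; apply Nat.leb_gt; lia.
Qed.

Lemma binom_C n k : (k <= n)%nat -> binom n k = Binomial.C n k.
Proof. intros H; unfold binom; apply Nat.leb_le in H; rewrite H; reflexivity. Qed.

Lemma binom_pascal n k : binom (S n) (S k) = binom n k + binom n (S k).
Proof.
  destruct (Nat.lt_total k n) as [Hk|[->|Hk]].
  - rewrite !binom_C by lia; symmetry; apply pascal; lia.
  - rewrite (binom_small n (S n)), !binom_C, !C_n_n by lia; ring.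
  - rewrite !binom_small by lia; ring.
Qed.

Lemma binom_ge0 n k : 0 <= binom n k.
Proof.
  revert k; induction n as [|n IH]; intros [|k].
  - rewrite binom_n_0; lra.
  - rewrite binom_small by lia; lra.
  - rewrite binom_n_0; lra.
  - rewrite binom_pascal; pose proof (IH k); pose proof (IH (S k)); lra.
Qed.

Lemma binom_absorb n k : binom (S n) (S k) * INR (S k) = INR (S n) * binom n k.
Proof.
  revert k; induction n as [|n IH]; intros k.
  - destruct k.
    + rewrite binom_n_0, binom_C, C_n_n by lia; ring.
    + rewrite !binom_small by lia; ring.
  - rewrite binom_pascal, Rmult_plus_distr_r, IH.
    destruct k as [|k].
    + rewrite !binom_n_0, (S_INR (S n)); simpl; ring.
    + rewrite (S_INR (S k)), Rmult_plus_distr_l, Rmult_1_r, IH, (binom_pascal n k).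
      rewrite (S_INR (S n)); ring.
Qed.

Lemma binom_absorb_compl n k : (INR (S n) - INR k) * binom (S n) k = INR (S n) * binom n k.
Proof.
  destruct k as [|k].
  - rewrite !binom_n_0; simpl; ring.
  - pose proof (binom_absorb n k); rewrite binom_pascal in *; lra.
Qed.

Definition binom_sum (n : nat) (x : R) (f : nat -> R) : R :=
  sum_f_R0 (fun j => binom n j * x ^ (n - j) * f j) n.

Lemma binom_sum_ext n x f g :
  (forall j, (j <= n)%nat -> f j = g j) -> binom_sum n x f = binom_sum n x g.
Proof. intros H; apply sum_eq; intros j Hj; rewrite H; auto. Qed.

Lemma binom_sum_plus n x f g :
  binom_sum n x (fun j => f j + g j) = binom_sum n x f + binom_sum n x g.
Proof. unfold binom_sum; rewrite <- sum_plus; apply sum_eq; intros; ring. Qed.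

Lemma binom_sum_scal n x k f : binom_sum n x (fun j => k * f j) = k * binom_sum n x f.
Proof. unfold binom_sum; rewrite scal_sum; apply sum_eq; intros; ring. Qed.

Lemma binom_sum_S n x f :
  binom_sum (S n) x f = x * binom_sum n x f + binom_sum n x (fun j => f (S j)).
Proof.
  unfold binom_sum; rewrite decomp_sum by lia; simpl pred; rewrite binom_n_0.
  transitivity (x ^ S n * f 0%nat
    + sum_f_R0 (fun i => binom n (S i) * x ^ (n - i) * f (S i)) n
    + sum_f_R0 (fun i => binom n i * x ^ (n - i) * f (S i)) n).
  { rewrite Rplus_assoc, <- sum_plus; f_equal; [simpl; ring|].
    apply sum_eq; intros i Hi; rewrite binom_pascal; simpl (S n - S i)%nat; ring. }
  f_equal; rewrite scal_sum.
  transitivity (sum_f_R0 (fun j => binom n j * x ^ (S n - j) * f j) (S n)).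
  { rewrite (decomp_sum _ (S n)) by lia; simpl pred; rewrite binom_n_0.
    f_equal; simpl; ring. }
  rewrite tech5, (binom_small n (S n)) by lia; rewrite !Rmult_0_l, Rplus_0_r.
  apply sum_eq; intros j Hj; rewrite Nat.sub_succ_l by lia; simpl; ring.
Qed.

Lemma binom_sum_pow n x y : binom_sum n x (pow y) = (x + y) ^ n.
Proof.
  induction n as [|n IH]; [unfold binom_sum; simpl; rewrite binom_n_0; ring|].
  rewrite binom_sum_S, IH, (binom_sum_ext n x _ (fun j => y * y ^ j)) by reflexivity.
  rewrite binom_sum_scal, IH; simpl; ring.
Qed.

(* The umbral form of [(1 + 2 Z + Z^2)^m = (1 + Z)^(2 m)]. *)
Lemma binom_sum_nested m h :
  binom_sum m 1 (fun i => binom_sum i 2 (fun j => h (i + j)%nat)) = binom_sum (2 * m) 1 h.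
Proof.
  revert h; induction m as [|m IH]; intros h; [unfold binom_sum; simpl; rewrite !binom_n_0; ring|].
  set (h' := fun k => h k + 2 * h (S k) + h (S (S k))).
  rewrite binom_sum_S, Rmult_1_l, <- binom_sum_plus.
  transitivity (binom_sum m 1 (fun i => binom_sum i 2 (fun j => h' (i + j)%nat))).
  { apply binom_sum_ext; intros i Hi.
    rewrite binom_sum_S; unfold h'; rewrite !binom_sum_plus, !binom_sum_scal.
    rewrite (binom_sum_ext i 2 (fun j => h (S (S (i + j)))) (fun j => h (S i + S j)%nat))
      by (intros; f_equal; lia).
    simpl; ring. }
  rewrite IH; replace (2 * S m)%nat with (S (S (2 * m))) by lia.
  rewrite !binom_sum_S; unfold h'; rewrite !binom_sum_plus, !binom_sum_scal; ring.
Qed.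

Lemma binom_sum_index_weighted n x y :
  binom_sum (S n) x (fun k => INR k / INR (S n) * y ^ k) = y * (x + y) ^ n.
Proof.
  rewrite <- binom_sum_pow, <- binom_sum_scal; unfold binom_sum.
  rewrite (decomp_sum _ (S n)) by lia; simpl pred.
  unfold Rdiv at 1; rewrite Rmult_0_l, !Rmult_0_l, Rmult_0_r, Rplus_0_l.
  apply sum_eq; intros i Hi.
  assert (HSn : INR (S n) <> 0) by (apply not_0_INR; lia).
  assert (HSi : INR (S i) <> 0) by (apply not_0_INR; lia).
  replace (binom (S n) (S i)) with (INR (S n) * binom n i / INR (S i))
    by (rewrite <- binom_absorb; field; auto).
  simpl (S n - S i)%nat; simpl (y ^ S i); field; auto.
Qed.

(** * Weighted AM-GM and [Theta] *)

Lemma pow_sub_lower s t k :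
  0 <= t <= s -> INR (S k) * t ^ k * (s - t) <= s ^ S k - t ^ S k.
Proof.
  intros Hst; induction k as [|k IH]; [simpl; lra|].
  assert (E : s ^ S (S k) - t ^ S (S k) = s * (s ^ S k - t ^ S k) + t * t ^ k * (s - t))
    by (simpl; ring).
  rewrite E, (S_INR (S k)); simpl (t ^ S k).
  assert (0 <= t ^ k) by (apply pow_le; lra).
  pose proof (pos_INR (S k)).
  assert (0 <= s * (s ^ S k - t ^ S k - INR (S k) * t ^ k * (s - t)))
    by (apply Rmult_le_pos; lra).
  assert (0 <= (s - t) * (INR (S k) * t ^ k * (s - t)))
    by (apply Rmult_le_pos; [lra|apply Rmult_le_pos; [apply Rmult_le_pos|]; lra]).
  simpl (t ^ S k) in *; nra.
Qed.

Lemma pow_sub_upper s t k :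
  0 <= t <= s -> s ^ S k - t ^ S k <= INR (S k) * s ^ k * (s - t).
Proof.
  intros Hst; induction k as [|k IH]; [simpl; lra|].
  assert (E : s ^ S (S k) - t ^ S (S k) = s * (s ^ S k - t ^ S k) + t ^ S k * (s - t))
    by (simpl; ring).
  rewrite E, (S_INR (S k)).
  assert (t ^ S k <= s ^ S k) by (apply pow_incr; lra).
  assert (0 <= s ^ k) by (apply pow_le; lra).
  assert (0 <= s * (INR (S k) * s ^ k * (s - t) - (s ^ S k - t ^ S k)))
    by (apply Rmult_le_pos; lra).
  assert (0 <= (s ^ S k - t ^ S k) * (s - t)) by (apply Rmult_le_pos; lra).
  simpl (s ^ S k) in *; nra.
Qed.

(* [a s^(a+k) + k t^(a+k) - (a+k) s^a t^k = a s^a (s^k - t^k) - k t^k (s^a - t^a)], and the two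
   differences are compared with [s - t] by the two previous lemmas. *)
Lemma pow_amgm_ordered a k s t : 0 <= t <= s ->
  INR (a + k) * s ^ a * t ^ k <= INR a * s ^ (a + k) + INR k * t ^ (a + k).
Proof.
  intros Hst; destruct a as [|a]; [simpl; lra|].
  pose proof (pow_sub_lower s t k Hst) as Hlow.
  pose proof (pow_sub_upper s t a Hst) as Hup.
  rewrite !pow_add, plus_INR.
  assert (0 <= t ^ k) by (apply pow_le; lra).
  assert (0 <= s ^ a) by (apply pow_le; lra).
  pose proof (pos_INR k); pose proof (pos_INR (S a)).
  assert (0 <= INR k * t ^ k * (INR (S a) * s ^ a * (s - t) - (s ^ S a - t ^ S a)))
    by (apply Rmult_le_pos; [apply Rmult_le_pos|]; lra).
  assert (0 <= INR (S a) * s ^ a * (s ^ S k - t ^ S k - INR (S k) * t ^ k * (s - t)))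
    by (apply Rmult_le_pos; [apply Rmult_le_pos|]; lra).
  rewrite (S_INR k) in *; simpl (s ^ S a) in *; simpl (s ^ S k) in *; simpl (t ^ S k) in *.
  nra.
Qed.

Definition amgm_gap (P : nat) (s t : R) (k : nat) : R :=
  (1 - INR k / INR P) * s ^ P + INR k / INR P * t ^ P - s ^ (P - k) * t ^ k.

Lemma amgm_gap_ge0 P s t k :
  (k <= P)%nat -> 0 <= s -> 0 <= t -> 0 <= amgm_gap P s t k.
Proof.
  intros Hk Hs Ht.
  destruct (Nat.eq_dec P 0) as [->|HP].
  { replace k with 0%nat by lia; unfold amgm_gap; simpl; unfold Rdiv; lra. }
  set (a := (P - k)%nat); assert (HPa : P = (a + k)%nat) by (unfold a; lia).
  assert (HI : 0 < INR P) by (apply lt_0_INR; lia).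
  assert (H : INR (a + k) * s ^ a * t ^ k <= INR a * s ^ (a + k) + INR k * t ^ (a + k)).
  { destruct (Rle_dec t s); [apply pow_amgm_ordered; lra|].
    rewrite (Nat.add_comm a k), Rmult_assoc, (Rmult_comm (s ^ a)), <- Rmult_assoc, Rplus_comm.
    apply pow_amgm_ordered; lra. }
  rewrite <- HPa in H.
  apply Rmult_le_reg_l with (INR P); [exact HI|]; rewrite Rmult_0_r.
  unfold amgm_gap; fold a.
  replace (INR P * ((1 - INR k / INR P) * s ^ P + INR k / INR P * t ^ P - s ^ a * t ^ k))
    with ((INR P - INR k) * s ^ P + INR k * t ^ P - INR P * s ^ a * t ^ k) by (field; lra).
  replace (INR P - INR k) with (INR a) by (rewrite HPa, plus_INR; ring).
  lra.
Qed.

Lemma binom_sum_amgm_gap n s t X Y :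
  binom_sum (S n) 1 (fun k => X ^ (S n - k) * Y ^ k * amgm_gap (S n) s t k) =
  s ^ S n * ((X + Y) ^ n * X) + t ^ S n * ((X + Y) ^ n * Y) - (s * X + t * Y) ^ S n.
Proof.
  transitivity (s ^ S n * binom_sum (S n) X (pow Y)
      - (s ^ S n - t ^ S n) * binom_sum (S n) X (fun k => INR k / INR (S n) * Y ^ k)
      - binom_sum (S n) (s * X) (pow (t * Y))).
  { unfold binom_sum; rewrite !scal_sum, <- !minus_sum; apply sum_eq; intros k Hk.
    unfold amgm_gap; rewrite !Rpow_mult_distr, pow1; ring. }
  rewrite !binom_sum_pow, binom_sum_index_weighted; simpl; ring.
Qed.

Lemma Theta_amgm_gap m s t i j : (1 <= m)%nat -> (1 <= i)%nat -> (1 <= j)%nat ->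
  Theta m s t i j = binom m i * binom i j * amgm_gap (2 * m) s t (i + j) / (2 * INR m).
Proof.
  intros Hm Hi Hj.
  destruct m as [|m]; [lia|]; destruct i as [|i]; [lia|]; destruct j as [|j]; [lia|].
  unfold Theta, amgm_gap.
  replace (S m - 1)%nat with m by lia; replace (S i - 1)%nat with i by lia;
    replace (S j - 1)%nat with j by lia.
  assert (HM : INR (S m) <> 0) by (apply not_0_INR; lia).
  assert (HI : INR (S i) <> 0) by (apply not_0_INR; lia).
  replace (binom m (S i)) with ((INR (S m) - INR (S i)) * binom (S m) (S i) / INR (S m))
    by (rewrite binom_absorb_compl; field; auto).
  replace (binom m i) with (binom (S m) (S i) * INR (S i) / INR (S m))
    by (rewrite binom_absorb; field; auto).
  replace (binom i (S j)) with ((INR (S i) - INR (S j)) * binom (S i) (S j) / INR (S i))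
    by (rewrite binom_absorb_compl; field; auto).
  replace (binom i j) with (binom (S i) (S j) * INR (S j) / INR (S i))
    by (rewrite binom_absorb; field; auto).
  rewrite plus_INR, mult_INR; simpl (INR 2); field; auto.
Qed.

Lemma Theta_ge0 m s t i j : (1 <= i <= m)%nat -> (1 <= j <= i)%nat ->
  0 <= s -> 0 <= t -> 0 <= Theta m s t i j.
Proof.
  intros Hi Hj Hs Ht; rewrite Theta_amgm_gap by lia.
  assert (0 < INR m) by (apply lt_0_INR; lia).
  apply Rmult_le_pos; [|apply Rlt_le, Rinv_0_lt_compat; lra].
  apply Rmult_le_pos; [apply Rmult_le_pos; apply binom_ge0|].
  apply amgm_gap_ge0; auto; lia.
Qed.

(** * The homogeneous inequality *)

Lemma lsum_ge0 l f : (forall x, In x l -> 0 <= f x) -> 0 <= lsum l f.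
Proof.
  induction l as [|x l IH]; simpl; intros H; [lra|].
  apply Rplus_le_le_0_compat; [apply H|apply IH; intros]; auto.
Qed.

Lemma lsum_le l f g : (forall x, In x l -> f x <= g x) -> lsum l f <= lsum l g.
Proof.
  induction l as [|x l IH]; simpl; intros H; [lra|].
  apply Rplus_le_compat; [apply H|apply IH; intros]; auto.
Qed.

Lemma lsum_ext l f g : (forall x, In x l -> f x = g x) -> lsum l f = lsum l g.
Proof. induction l as [|x l IH]; simpl; intros H; [|rewrite H, IH]; auto. Qed.

Lemma lsum_app l1 l2 f : lsum (l1 ++ l2) f = lsum l1 f + lsum l2 f.
Proof. induction l1 as [|x l IH]; simpl; [ring|rewrite IH; ring]. Qed.

Lemma lsum_seq_0 N f : lsum (seq 0 (S N)) f = sum_f_R0 f N.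
Proof.
  induction N as [|N IH]; [simpl; ring|].
  rewrite seq_S, lsum_app, IH; simpl; ring.
Qed.

Lemma lsum_seq_le_sum_f_R0 a n N f : (a + n <= S N)%nat ->
  (forall k, (k <= N)%nat -> 0 <= f k) -> lsum (seq a n) f <= sum_f_R0 f N.
Proof.
  intros Han Hf; rewrite <- lsum_seq_0.
  replace (S N) with (a + n + (S N - (a + n)))%nat by lia.
  rewrite (seq_app (a + n)), (seq_app a n 0), !lsum_app.
  assert (0 <= lsum (seq 0 a) f /\ 0 <= lsum (seq (0 + (a + n)) (S N - (a + n))) f) as [];
    [split; apply lsum_ge0; intros x Hx; apply in_seq in Hx; apply Hf; lia|].
  simpl (0 + a)%nat; lra.
Qed.

Definition theta_sum (m : nat) (s t X Y : R) : R :=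
  lsum (seq 1 (m - 1)) (fun i =>
    lsum (seq 1 (i - 1)) (fun j =>
      2 ^ (i - j) * Rabs (X ^ (2 * m - (i + j)) * Y ^ (i + j)) * Theta m s t i j)).

Lemma theta_sum_ge0 m s t X Y : 0 <= s -> 0 <= t -> 0 <= theta_sum m s t X Y.
Proof.
  intros Hs Ht; apply lsum_ge0; intros i Hi; apply in_seq in Hi.
  apply lsum_ge0; intros j Hj; apply in_seq in Hj.
  apply Rmult_le_pos; [apply Rmult_le_pos; [apply pow_le; lra|apply Rabs_pos]|].
  apply Theta_ge0; auto; lia.
Qed.

Lemma theta_sum_opp m s t X Y : theta_sum m s t (- X) (- Y) = theta_sum m s t X Y.
Proof.
  apply lsum_ext; intros i _; apply lsum_ext; intros j _.
  rewrite !Rabs_mult, <- !RPow_abs, !Rabs_Ropp; reflexivity.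
Qed.

Lemma theta_sum_le_amgm_gaps m s t X Y : (1 <= m)%nat -> 0 <= s -> 0 <= t -> 0 <= X -> 0 <= Y ->
  theta_sum m s t X Y <=
  / (2 * INR m) * binom_sum (2 * m) 1 (fun k => X ^ (2 * m - k) * Y ^ k * amgm_gap (2 * m) s t k).
Proof.
  intros Hm Hs Ht HX HY.
  assert (HP : 0 < 2 * INR m) by (assert (0 < INR m) by (apply lt_0_INR; lia); lra).
  set (g := fun k => / (2 * INR m) * (X ^ (2 * m - k) * Y ^ k * amgm_gap (2 * m) s t k)).
  assert (Hg : forall k, (k <= 2 * m)%nat -> 0 <= g k).
  { intros k Hk; apply Rmult_le_pos; [apply Rlt_le, Rinv_0_lt_compat; lra|].
    apply Rmult_le_pos; [apply Rmult_le_pos; apply pow_le; lra|apply amgm_gap_ge0; auto]. }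
  set (T := fun i j => binom m i * 1 ^ (m - i) * (binom i j * 2 ^ (i - j) * g (i + j)%nat)).
  assert (HT : forall i j, (i <= m)%nat -> 0 <= T i j).
  { intros i j Hi; unfold T; rewrite pow1.
    destruct (le_lt_dec j i) as [Hj|Hj]; [|rewrite (binom_small i j Hj); lra].
    apply Rmult_le_pos; [apply Rmult_le_pos; [apply binom_ge0|lra]|].
    apply Rmult_le_pos; [apply Rmult_le_pos; [apply binom_ge0|apply pow_le; lra]|apply Hg; lia]. }
  rewrite <- binom_sum_scal, <- binom_sum_nested.
  transitivity (lsum (seq 1 (m - 1)) (fun i => lsum (seq 1 (i - 1)) (T i))).
  { apply lsum_le; intros i Hi; apply in_seq in Hi; apply Req_le, lsum_ext; intros j Hj.
    apply in_seq in Hj; unfold T, g; rewrite Theta_amgm_gap, pow1 by lia.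
    rewrite Rabs_right by (apply Rle_ge, Rmult_le_pos; apply pow_le; lra).
    field; lra. }
  transitivity (lsum (seq 1 (m - 1)) (fun i => sum_f_R0 (T i) i)).
  { apply lsum_le; intros i Hi; apply in_seq in Hi.
    apply lsum_seq_le_sum_f_R0; [lia|intros; apply HT; lia]. }
  replace (binom_sum m 1 _) with (sum_f_R0 (fun i => sum_f_R0 (T i) i) m)
    by (apply sum_eq; intros i Hi; unfold binom_sum; rewrite scal_sum;
        apply sum_eq; intros; unfold T, g; ring).
  apply lsum_seq_le_sum_f_R0; [lia|].
  intros i Hi; apply cond_pos_sum; intros j; apply HT, Hi.
Qed.

(* The [p]-homogeneous part of the pointwise deficit, [X] and [Y] standing for the values
   (or the differences) of [u^+] and [u^-] at one site, and [al], [bt] for the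
   coefficients of [<I'(u), u^+>] and [<I'(u), u^->]. *)
Definition hom_deficit (m : nat) (s t al bt X Y : R) : R :=
  / (2 * INR m) * (X + Y) ^ (2 * m) - / (2 * INR m) * (s * X + t * Y) ^ (2 * m)
  - al * ((X + Y) ^ (2 * m - 1) * X) - bt * ((X + Y) ^ (2 * m - 1) * Y)
  - ((1 - s ^ (2 * m)) / (2 * INR m) - al) * X ^ (2 * m)
  - ((1 - t ^ (2 * m)) / (2 * INR m) - bt) * Y ^ (2 * m).

Lemma hom_deficit_ge_amgm_gaps m s t al bt X Y : (1 <= m)%nat -> 0 <= X -> 0 <= Y ->
  al <= (1 - s ^ (2 * m)) / (2 * INR m) -> bt <= (1 - t ^ (2 * m)) / (2 * INR m) ->
  / (2 * INR m) * binom_sum (2 * m) 1 (fun k => X ^ (2 * m - k) * Y ^ k * amgm_gap (2 * m) s t k)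
  <= hom_deficit m s t al bt X Y.
Proof.
  intros Hm HX HY Hal Hbt.
  assert (0 < INR m) by (apply lt_0_INR; lia).
  unfold hom_deficit; set (n := (2 * m - 1)%nat).
  assert (Hn : (2 * m)%nat = S n) by (unfold n; lia).
  rewrite Hn in *; rewrite binom_sum_amgm_gap.
  assert (HXn : X ^ S n <= (X + Y) ^ n * X)
    by (simpl; rewrite Rmult_comm; apply Rmult_le_compat_r; [|apply pow_incr]; lra).
  assert (HYn : Y ^ S n <= (X + Y) ^ n * Y)
    by (simpl; rewrite Rmult_comm; apply Rmult_le_compat_r; [|apply pow_incr]; lra).
  assert (0 <= ((1 - s ^ S n) / (2 * INR m) - al) * ((X + Y) ^ n * X - X ^ S n))
    by (apply Rmult_le_pos; lra).
  assert (0 <= ((1 - t ^ S n) / (2 * INR m) - bt) * ((X + Y) ^ n * Y - Y ^ S n))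
    by (apply Rmult_le_pos; lra).
  apply Rminus_le; match goal with |- ?l - ?r <= 0 => replace (l - r) with
    (- (((1 - s ^ S n) / (2 * INR m) - al) * ((X + Y) ^ n * X - X ^ S n))
     - ((1 - t ^ S n) / (2 * INR m) - bt) * ((X + Y) ^ n * Y - Y ^ S n)) by (simpl; field; lra) end.
  lra.
Qed.

Lemma pow_opp_even z m : (- z) ^ (2 * m) = z ^ (2 * m).
Proof. rewrite !pow_mult; f_equal; ring. Qed.

Lemma pow_opp_odd z m : (1 <= m)%nat -> (- z) ^ (2 * m - 1) = - z ^ (2 * m - 1).
Proof.
  intros Hm; replace (2 * m - 1)%nat with (S (2 * (m - 1))) by lia.
  rewrite <- !tech_pow_Rmult, pow_opp_even; ring.
Qed.

Lemma hom_deficit_opp m s t al bt X Y : (1 <= m)%nat ->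
  hom_deficit m s t al bt (- X) (- Y) = hom_deficit m s t al bt X Y.
Proof.
  intros Hm; unfold hom_deficit.
  replace (- X + - Y) with (- (X + Y)) by ring.
  replace (s * - X + t * - Y) with (- (s * X + t * Y)) by ring.
  rewrite !pow_opp_even, !pow_opp_odd by exact Hm; ring.
Qed.

Lemma theta_sum_le_hom_deficit m s t al bt X Y :
  (1 <= m)%nat -> 0 <= s -> 0 <= t -> 0 <= X * Y ->
  al <= (1 - s ^ (2 * m)) / (2 * INR m) -> bt <= (1 - t ^ (2 * m)) / (2 * INR m) ->
  theta_sum m s t X Y <= hom_deficit m s t al bt X Y.
Proof.
  intros Hm Hs Ht HXY Hal Hbt.
  assert (Hpos : forall X Y, 0 <= X -> 0 <= Y ->
            theta_sum m s t X Y <= hom_deficit m s t al bt X Y).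
  { intros X' Y' HX HY; eapply Rle_trans; [apply theta_sum_le_amgm_gaps; auto|].
    apply hom_deficit_ge_amgm_gaps; auto. }
  destruct (Rle_dec 0 X), (Rle_dec 0 Y); try (apply Hpos; lra).
  all: rewrite <- theta_sum_opp, <- hom_deficit_opp by exact Hm; apply Hpos; nra.
Qed.

(** * Real powers and the logarithmic term *)

Lemma rpow_0 y : rpow 0 y = 0.
Proof. unfold rpow; destruct (Req_EM_T 0 0); [reflexivity|contradiction]. Qed.

Lemma rpow_pos x y : 0 < x -> rpow x y = Rpower x y.
Proof. intros; unfold rpow; destruct (Req_EM_T x 0); [lra|reflexivity]. Qed.

Lemma rpow_ge0 x y : 0 <= rpow x y.
Proof. unfold rpow; destruct (Req_EM_T x 0); [lra|unfold Rpower; left; apply exp_pos]. Qed.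

Lemma pow_abs_even x m : Rabs x ^ (2 * m) = x ^ (2 * m).
Proof. rewrite !pow_mult, pow2_abs; reflexivity. Qed.

Lemma rpow_abs_even x m : (1 <= m)%nat -> rpow (Rabs x) (2 * INR m) = x ^ (2 * m).
Proof.
  intros Hm; destruct (Req_EM_T x 0) as [->|Hx].
  - rewrite Rabs_R0, rpow_0, pow_i by lia; reflexivity.
  - rewrite rpow_pos by (apply Rabs_pos_lt; auto).
    replace (2 * INR m) with (INR (2 * m)) by (rewrite mult_INR; reflexivity).
    rewrite Rpower_pow by (apply Rabs_pos_lt; auto); apply pow_abs_even.
Qed.

Lemma rpow_abs_even_sub2 x m : (1 <= m)%nat ->
  rpow (Rabs x) (2 * INR m - 2) * x = x ^ (2 * m - 1).
Proof.
  intros Hm; destruct (Req_EM_T x 0) as [->|Hx].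
  - rewrite Rabs_R0, rpow_0, pow_i by lia; ring.
  - rewrite rpow_pos by (apply Rabs_pos_lt; auto).
    replace (2 * INR m - 2) with (INR (2 * (m - 1))) by
      (rewrite mult_INR, minus_INR by lia; simpl; ring).
    rewrite Rpower_pow, pow_abs_even by (apply Rabs_pos_lt; auto).
    replace (2 * m - 1)%nat with (S (2 * (m - 1))) by lia; simpl; ring.
Qed.

Lemma rpow_mult x y e : 0 <= x -> 0 <= y -> rpow (x * y) e = rpow x e * rpow y e.
Proof.
  intros Hx Hy.
  destruct (Req_EM_T x 0) as [->|]; [rewrite Rmult_0_l, !rpow_0; ring|].
  destruct (Req_EM_T y 0) as [->|]; [rewrite Rmult_0_r, !rpow_0; ring|].
  rewrite !rpow_pos by (try apply Rmult_lt_0_compat; lra).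
  symmetry; apply Rpower_mult_distr; lra.
Qed.

Lemma rpow_le e x y : 0 <= e -> 0 <= x <= y -> rpow x e <= rpow y e.
Proof.
  intros He Hxy; destruct (Req_EM_T x 0) as [->|].
  - rewrite rpow_0; apply rpow_ge0.
  - rewrite !rpow_pos by lra; apply Rle_Rpower_l; auto; lra.
Qed.

Lemma rpow_abs_sub2 q x : x <> 0 -> rpow (Rabs x) (q - 2) * x * x = rpow (Rabs x) q.
Proof.
  intros Hx; assert (Ha : 0 < Rabs x) by (apply Rabs_pos_lt; auto).
  rewrite !rpow_pos by auto.
  replace q with ((q - 2) + INR 2) at 2 by (simpl; ring).
  rewrite Rpower_plus, Rpower_pow, Rmult_assoc by auto; f_equal.
  rewrite pow2_abs; ring.
Qed.

Lemma rpow_rpow_inv x p : 0 <= x -> 0 < p -> rpow (rpow x (/ p)) p = x.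
Proof.
  intros Hx Hp; destruct (Req_EM_T x 0) as [->|]; [rewrite !rpow_0; reflexivity|].
  rewrite (rpow_pos x), rpow_pos by (try (unfold Rpower; apply exp_pos); lra).
  rewrite Rpower_mult, Rinv_l, Rpower_1 by lra; reflexivity.
Qed.

Lemma ln_rpow x r : 0 < x -> ln (rpow x r) = r * ln x.
Proof. intros; rewrite rpow_pos by auto; apply ln_Rpower. Qed.

Lemma x_ln_x_ge x : 0 < x -> x - 1 <= x * ln x.
Proof.
  intros Hx; pose proof (exp_ineq1_le (ln (/ x))) as H.
  rewrite exp_ln, ln_Rinv in H by (try apply Rinv_0_lt_compat; auto).
  apply Rmult_le_compat_l with (r := x) in H; [|lra].
  rewrite Rinv_r in H by lra; nra.
Qed.

(* Bernoulli's inequality [y^rho >= 1 + rho (y - 1)] for [y = s^p] and [rho = q / p]. *)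
Lemma one_sub_rpow_div_antitone s p q : 0 <= s -> 0 < p -> p < q ->
  (1 - rpow s q) / q <= (1 - rpow s p) / p.
Proof.
  intros Hs Hp Hq; destruct (Req_EM_T s 0) as [->|Hs0].
  { rewrite !rpow_0; unfold Rdiv; rewrite !Rminus_0_r, !Rmult_1_l.
    apply Rinv_le_contravar; lra. }
  rewrite !rpow_pos by lra.
  set (y := Rpower s p); set (rho := q / p).
  assert (Hy : 0 < y) by (unfold y, Rpower; apply exp_pos).
  assert (Hrho : 1 < rho) by (unfold rho; apply Rlt_div_r; lra).
  replace (Rpower s q) with (Rpower y rho)
    by (unfold y, rho; rewrite Rpower_mult; f_equal; field; lra).
  assert (Bern : 1 - rho + rho * y <= Rpower y rho).
  { replace rho with (1 + (rho - 1)) at 3 by ring.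
    rewrite Rpower_plus, Rpower_1 by auto.
    pose proof (exp_ineq1_le ((rho - 1) * ln y)) as H1.
    change (exp ((rho - 1) * ln y)) with (Rpower y (rho - 1)) in H1.
    pose proof (x_ln_x_ge y Hy).
    assert (0 <= (rho - 1) * (y * ln y - (y - 1))) by (apply Rmult_le_pos; lra).
    nra. }
  replace ((1 - y) / p) with (rho * (1 - y) / q) by (unfold rho; field; lra).
  unfold Rdiv; apply Rmult_le_compat_r; [left; apply Rinv_0_lt_compat|]; lra.
Qed.

Definition log_energy (q r cn y : R) : R :=
  if Req_EM_T y 0 then 0 else cn * rpow (Rabs y) q * ln (rpow (Rabs y) r).

Definition log_pairing (q r cn y v : R) : R :=
  if Req_EM_T y 0 then 0 else cn * rpow (Rabs y) (q - 2) * y * v * ln (rpow (Rabs y) r).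

Definition c_density (q r cn y : R) : R :=
  r / q ^ 2 * (cn * rpow (Rabs y) q) - / q * log_energy q r cn y.

Lemma log_energy_0 q r cn : log_energy q r cn 0 = 0.
Proof. unfold log_energy; destruct (Req_EM_T 0 0); [reflexivity|contradiction]. Qed.

Lemma log_pairing_0_r q r cn y : log_pairing q r cn y 0 = 0.
Proof. unfold log_pairing; destruct (Req_EM_T y 0); [|ring]; reflexivity. Qed.

Lemma log_pairing_diag q r cn y : log_pairing q r cn y y = log_energy q r cn y.
Proof.
  unfold log_pairing, log_energy; destruct (Req_EM_T y 0); [reflexivity|].
  rewrite <- (rpow_abs_sub2 q y) by auto; ring.
Qed.

Lemma log_energy_scale q r cn l y : 0 < l -> y <> 0 ->
  log_energy q r cn (l * y)
  = rpow l q * (r * ln l * (cn * rpow (Rabs y) q) + log_energy q r cn y).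
Proof.
  intros Hl Hy; unfold log_energy.
  destruct (Req_EM_T (l * y) 0) as [E|_]; [apply Rmult_integral in E; lra|].
  destruct (Req_EM_T y 0) as [|_]; [contradiction|].
  assert (0 < Rabs y) by (apply Rabs_pos_lt; auto).
  rewrite Rabs_mult, (Rabs_right l), !rpow_mult by lra.
  rewrite ln_mult, (ln_rpow l) by (try rewrite rpow_pos; try apply exp_pos; lra); ring.
Qed.

(* The right-hand side equals [r/q^2 c |y|^q (1 - sg + sg ln sg)] with [sg = l^q], which is
   nonnegative since [sg ln sg >= sg - 1]. *)
Lemma c_density_scale_deficit q r cn l y : 0 < q -> 0 <= r -> 0 <= cn -> 0 <= l ->
  0 <= c_density q r cn y - c_density q r cn (l * y)
       + (1 - rpow l q) / q * log_energy q r cn y.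
Proof.
  intros Hq Hr Hc Hl; unfold c_density.
  assert (HC : 0 <= cn * rpow (Rabs y) q) by (apply Rmult_le_pos; auto; apply rpow_ge0).
  assert (Hq2 : 0 <= r / q ^ 2) by (apply Rdiv_le_0_compat; [|apply pow_lt]; lra).
  destruct (Req_EM_T y 0) as [->|Hy].
  { rewrite Rmult_0_r, Rabs_R0, rpow_0, log_energy_0; lra. }
  destruct (Req_EM_T l 0) as [->|Hl0].
  { rewrite Rmult_0_l, Rabs_R0, !rpow_0, log_energy_0.
    replace (_ - _ + _) with (r / q ^ 2 * (cn * rpow (Rabs y) q)) by (field; lra).
    apply Rmult_le_pos; auto. }
  rewrite log_energy_scale, Rabs_mult, (Rabs_right l), rpow_mult by (try apply Rabs_pos; lra).
  set (sg := rpow l q).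
  assert (Hsg : 0 < sg) by (unfold sg; rewrite rpow_pos by lra; apply exp_pos).
  assert (Hln : ln sg = q * ln l) by (apply ln_rpow; lra).
  pose proof (x_ln_x_ge sg Hsg).
  replace (_ - _ + _) with (r / q ^ 2 * (cn * rpow (Rabs y) q) * (1 - sg + sg * ln sg))
    by (rewrite Hln; field; lra).
  apply Rmult_le_pos; [apply Rmult_le_pos|]; lra.
Qed.

Lemma comb_pos_neg_cases s t y :
  s * Rmax y 0 + t * Rmin y 0 = s * y /\ Rmin y 0 = 0 /\ Rmax y 0 = y \/
  s * Rmax y 0 + t * Rmin y 0 = t * y /\ Rmax y 0 = 0 /\ Rmin y 0 = y.
Proof.
  unfold Rmax, Rmin; destruct (Rle_dec y 0); [right|left]; repeat split; ring.
Qed.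

Lemma c_density_deficit q r cn s t y : 0 < q -> 0 <= r -> 0 <= cn -> 0 <= s -> 0 <= t ->
  0 <= c_density q r cn y - c_density q r cn (s * Rmax y 0 + t * Rmin y 0)
       + (1 - rpow s q) / q * log_pairing q r cn y (Rmax y 0)
       + (1 - rpow t q) / q * log_pairing q r cn y (Rmin y 0).
Proof.
  intros Hq Hr Hc Hs Ht.
  destruct (comb_pos_neg_cases s t y) as [[-> [-> ->]]|[-> [-> ->]]];
    rewrite log_pairing_diag, log_pairing_0_r, Rmult_0_r;
    [pose proof (c_density_scale_deficit q r cn s y Hq Hr Hc Hs)
    |pose proof (c_density_scale_deficit q r cn t y Hq Hr Hc Ht)];
    lra.
Qed.

(** * Series over [Z] *)

Definition ex_zsum (f : Z -> R) : Prop :=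
  ex_series (fun n : nat => f (Z.of_nat n)) /\ ex_series (fun n : nat => f (- Z.of_nat (S n))%Z).

Lemma ex_zsum_of_zsummable f : zsummable f -> ex_zsum f.
Proof. intros [H1 H2]; split; apply ex_series_Rabs; auto. Qed.

Lemma ex_zsum_plus f g : ex_zsum f -> ex_zsum g -> ex_zsum (fun n => f n + g n).
Proof. intros [] []; split; apply (ex_series_plus (V := R_NormedModule)); auto. Qed.

Lemma ex_zsum_scal k f : ex_zsum f -> ex_zsum (fun n => k * f n).
Proof. intros []; split; apply (ex_series_scal_l (V := R_NormedModule)); auto. Qed.

Lemma ex_zsum_minus f g : ex_zsum f -> ex_zsum g -> ex_zsum (fun n => f n - g n).
Proof. intros [] []; split; apply (ex_series_minus (V := R_NormedModule)); auto. Qed.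

Lemma ex_zsum_le f g : (forall n, Rabs (f n) <= g n) -> ex_zsum g -> ex_zsum f.
Proof.
  intros H [Hp Hn]; split;
    [eapply (ex_series_le (V := R_CompleteNormedModule)), Hp
    |eapply (ex_series_le (V := R_CompleteNormedModule)), Hn]; intros k; apply H.
Qed.

Lemma zsum_plus f g : ex_zsum f -> ex_zsum g -> zsum (fun n => f n + g n) = zsum f + zsum g.
Proof. intros [] []; unfold zsum; rewrite !Series_plus by auto; ring. Qed.

Lemma zsum_minus f g : ex_zsum f -> ex_zsum g -> zsum (fun n => f n - g n) = zsum f - zsum g.
Proof. intros [] []; unfold zsum; rewrite !Series_minus by auto; ring. Qed.

Lemma zsum_scal k f : zsum (fun n => k * f n) = k * zsum f.
Proof. unfold zsum; rewrite !Series_scal_l; ring. Qed.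

Lemma Series_ge0 (a : nat -> R) : ex_series a -> (forall n, 0 <= a n) -> 0 <= Series a.
Proof.
  intros Ha H; rewrite <- (Rmult_0_l (Series a)), <- Series_scal_l.
  apply Series_le; auto; intros n; specialize (H n); split; lra.
Qed.

Lemma zsum_ge0 f : ex_zsum f -> (forall n, 0 <= f n) -> 0 <= zsum f.
Proof. intros [Hp Hn] H; apply Rplus_le_le_0_compat; apply Series_ge0; auto. Qed.

Lemma zsum_le f g : ex_zsum f -> ex_zsum g -> (forall n, f n <= g n) -> zsum f <= zsum g.
Proof.
  intros Hf Hg H.
  assert (Hd : 0 <= zsum (fun n => g n - f n))
    by (apply zsum_ge0; [apply ex_zsum_minus|intros n; specialize (H n); lra]; auto).
  rewrite zsum_minus in Hd by auto; lra.
Qed.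

(** * Positive and negative parts *)

Lemma Rmax_add_Rmin x : Rmax x 0 + Rmin x 0 = x.
Proof. unfold Rmax, Rmin; destruct (Rle_dec x 0); ring. Qed.

Lemma Rmax_mul_Rmin_ge0 x : 0 <= Rmax x 0 * Rmin x 0.
Proof. unfold Rmax, Rmin; destruct (Rle_dec x 0); lra. Qed.

Lemma fdiff_posp_add_negp u n : fdiff (posp u) n + fdiff (negp u) n = fdiff u n.
Proof.
  unfold fdiff, posp, negp; pose proof (Rmax_add_Rmin (u n)).
  pose proof (Rmax_add_Rmin (u (n + 1)%Z)); lra.
Qed.

Lemma fdiff_posp_mul_negp_ge0 u n : 0 <= fdiff (posp u) n * fdiff (negp u) n.
Proof.
  unfold fdiff, posp, negp, Rmax, Rmin.
  destruct (Rle_dec (u (n + 1)%Z) 0), (Rle_dec (u n) 0); nra.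
Qed.

Lemma fdiff_comb u s t n :
  fdiff (fun k => s * posp u k + t * negp u k) n = s * fdiff (posp u) n + t * fdiff (negp u) n.
Proof. unfold fdiff; ring. Qed.

Lemma Rabs_add_same_sign X Y : 0 <= X * Y -> Rabs (X + Y) = Rabs X + Rabs Y.
Proof.
  intros H; destruct (Rcase_abs X), (Rcase_abs Y), (Rcase_abs (X + Y));
    repeat first [rewrite Rabs_left by lra | rewrite Rabs_right by lra]; nra.
Qed.

Lemma Rabs_comb_le s t X Y : 0 <= s -> 0 <= t -> 0 <= X * Y ->
  Rabs (s * X + t * Y) <= (s + t) * Rabs (X + Y).
Proof.
  intros Hs Ht HXY; rewrite (Rabs_add_same_sign X Y HXY).
  eapply Rle_trans; [apply Rabs_triang|]; rewrite !Rabs_mult, (Rabs_right s), (Rabs_right t) by lra.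
  pose proof (Rabs_pos X); pose proof (Rabs_pos Y); nra.
Qed.

Lemma pow_even_le m x y : Rabs x <= Rabs y -> x ^ (2 * m) <= y ^ (2 * m).
Proof.
  intros H; rewrite <- (pow_abs_even x), <- (pow_abs_even y).
  apply pow_incr; split; [apply Rabs_pos|exact H].
Qed.

Lemma Rabs_pow_odd_mul_le m x y : (1 <= m)%nat -> Rabs y <= Rabs x ->
  Rabs (x ^ (2 * m - 1) * y) <= x ^ (2 * m).
Proof.
  intros Hm H; rewrite Rabs_mult, <- RPow_abs, <- (pow_abs_even x).
  replace (2 * m)%nat with (S (2 * m - 1)) at 2 by lia; simpl; rewrite Rmult_comm.
  apply Rmult_le_compat_r; [apply pow_le, Rabs_pos|exact H].
Qed.

Lemma fdiff_posp_abs_le u n : Rabs (fdiff (posp u) n) <= Rabs (fdiff u n).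
Proof.
  rewrite <- (fdiff_posp_add_negp u n), Rabs_add_same_sign by apply fdiff_posp_mul_negp_ge0.
  pose proof (Rabs_pos (fdiff (negp u) n)); lra.
Qed.

Lemma fdiff_negp_abs_le u n : Rabs (fdiff (negp u) n) <= Rabs (fdiff u n).
Proof.
  rewrite <- (fdiff_posp_add_negp u n), Rabs_add_same_sign by apply fdiff_posp_mul_negp_ge0.
  pose proof (Rabs_pos (fdiff (posp u) n)); lra.
Qed.

Lemma posp_abs_le u n : Rabs (posp u n) <= Rabs (u n).
Proof. unfold posp, Rmax; destruct (Rle_dec (u n) 0); [rewrite Rabs_R0; apply Rabs_pos|lra]. Qed.

Lemma negp_abs_le u n : Rabs (negp u n) <= Rabs (u n).
Proof. unfold negp, Rmin; destruct (Rle_dec (u n) 0); [lra|rewrite Rabs_R0; apply Rabs_pos]. Qed.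

Lemma normp_term_ge0 p a b v n : 0 <= a n -> 0 <= b n -> 0 <= normp_term p a b v n.
Proof.
  intros Ha Hb; unfold normp_term.
  apply Rplus_le_le_0_compat; apply Rmult_le_pos; auto; apply rpow_ge0.
Qed.

Lemma normp_term_even m a b v n : (1 <= m)%nat ->
  normp_term (2 * INR m) a b v n = a n * fdiff v n ^ (2 * m) + b n * v n ^ (2 * m).
Proof. intros Hm; unfold normp_term; rewrite !rpow_abs_even by exact Hm; reflexivity. Qed.

Lemma normp_term_comb_le m a b u v s t n : (1 <= m)%nat -> 0 <= a n -> 0 <= b n ->
  0 <= s -> 0 <= t -> (forall k, v k = s * posp u k + t * negp u k) ->
  normp_term (2 * INR m) a b v n <= (s + t) ^ (2 * m) * normp_term (2 * INR m) a b u n.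
Proof.
  intros Hm Ha Hb Hs Ht Hv; rewrite !normp_term_even by exact Hm.
  assert (Hd : fdiff v n = s * fdiff (posp u) n + t * fdiff (negp u) n)
    by (unfold fdiff; rewrite !Hv; ring).
  assert (Hdiff : fdiff v n ^ (2 * m) <= (s + t) ^ (2 * m) * fdiff u n ^ (2 * m)).
  { rewrite <- Rpow_mult_distr, Hd, <- (fdiff_posp_add_negp u n); apply pow_even_le.
    rewrite Rabs_mult, (Rabs_right (s + t)) by lra.
    apply Rabs_comb_le, fdiff_posp_mul_negp_ge0; auto. }
  assert (Hval : v n ^ (2 * m) <= (s + t) ^ (2 * m) * u n ^ (2 * m)).
  { rewrite <- Rpow_mult_distr, Hv, <- (Rmax_add_Rmin (u n)); apply pow_even_le.
    rewrite Rabs_mult, (Rabs_right (s + t)) by lra.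
    apply Rabs_comb_le, Rmax_mul_Rmin_ge0; auto. }
  apply Rmult_le_compat_l with (r := a n) in Hdiff; auto.
  apply Rmult_le_compat_l with (r := b n) in Hval; auto.
  lra.
Qed.

Definition pairing_term (p : R) (a b u v : Z -> R) (n : Z) : R :=
  a n * rpow (Rabs (fdiff u n)) (p - 2) * fdiff u n * fdiff v n
  + b n * rpow (Rabs (u n)) (p - 2) * u n * v n.

Lemma pairing_term_even m a b u v n : (1 <= m)%nat ->
  pairing_term (2 * INR m) a b u v n
  = a n * (fdiff u n ^ (2 * m - 1) * fdiff v n) + b n * (u n ^ (2 * m - 1) * v n).
Proof.
  intros Hm; unfold pairing_term; rewrite <- !(rpow_abs_even_sub2 _ m Hm); ring.
Qed.

Lemma pairing_term_abs_le m a b u v n : (1 <= m)%nat -> 0 <= a n -> 0 <= b n ->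
  Rabs (fdiff v n) <= Rabs (fdiff u n) -> Rabs (v n) <= Rabs (u n) ->
  Rabs (pairing_term (2 * INR m) a b u v n) <= normp_term (2 * INR m) a b u n.
Proof.
  intros Hm Ha Hb Hd Hv; rewrite pairing_term_even, normp_term_even by exact Hm.
  eapply Rle_trans; [apply Rabs_triang|].
  rewrite (Rabs_mult (a n)), (Rabs_mult (b n)), (Rabs_right (a n)), (Rabs_right (b n)) by lra.
  apply Rplus_le_compat; apply Rmult_le_compat_l; auto; apply Rabs_pow_odd_mul_le; auto.
Qed.

Lemma log_pairing_Rmax_abs_le q r cn y :
  Rabs (log_pairing q r cn y (Rmax y 0)) <= Rabs (log_energy q r cn y).
Proof.
  unfold Rmax; destruct (Rle_dec y 0).
  - rewrite log_pairing_0_r, Rabs_R0; apply Rabs_pos.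
  - rewrite log_pairing_diag; lra.
Qed.

Lemma log_pairing_Rmin_abs_le q r cn y :
  Rabs (log_pairing q r cn y (Rmin y 0)) <= Rabs (log_energy q r cn y).
Proof.
  unfold Rmin; destruct (Rle_dec y 0).
  - rewrite log_pairing_diag; lra.
  - rewrite log_pairing_0_r, Rabs_R0; apply Rabs_pos.
Qed.

Lemma c_pow_comb_le q cn s t y : 0 <= q -> 0 <= cn -> 0 <= s -> 0 <= t ->
  cn * rpow (Rabs (s * Rmax y 0 + t * Rmin y 0)) q <= rpow (s + t) q * (cn * rpow (Rabs y) q).
Proof.
  intros Hq Hc Hs Ht.
  assert (H : Rabs (s * Rmax y 0 + t * Rmin y 0) <= (s + t) * Rabs y).
  { destruct (comb_pos_neg_cases s t y) as [[-> _]|[-> _]];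
      rewrite Rabs_mult, Rabs_right by lra; pose proof (Rabs_pos y); nra. }
  apply (fun H => rpow_le q _ _ Hq (conj (Rabs_pos _) H)) in H.
  rewrite rpow_mult in H by (try apply Rabs_pos; lra).
  rewrite <- Rmult_assoc, (Rmult_comm _ cn), Rmult_assoc; apply Rmult_le_compat_l; auto.
Qed.

Lemma log_energy_scale_abs_le q r cn l y : 0 <= cn -> 0 <= l ->
  Rabs (log_energy q r cn (l * y))
  <= rpow l q * (Rabs (r * ln l) + 1) * (cn * rpow (Rabs y) q + Rabs (log_energy q r cn y)).
Proof.
  intros Hc Hl.
  assert (HC : 0 <= cn * rpow (Rabs y) q) by (apply Rmult_le_pos; auto; apply rpow_ge0).
  pose proof (Rabs_pos (r * ln l)); pose proof (Rabs_pos (log_energy q r cn y)).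
  pose proof (rpow_ge0 l q).
  assert (0 <= rpow l q * (Rabs (r * ln l) + 1)
               * (cn * rpow (Rabs y) q + Rabs (log_energy q r cn y)))
    by (apply Rmult_le_pos; [apply Rmult_le_pos|]; lra).
  destruct (Rle_lt_or_eq_dec 0 l Hl) as [Hl0|Hl0];
    [|rewrite <- Hl0 at 1; rewrite Rmult_0_l, log_energy_0, Rabs_R0; lra].
  destruct (Req_EM_T y 0) as [Hy|Hy];
    [rewrite Hy at 1; rewrite Rmult_0_r, log_energy_0, Rabs_R0; lra|].
  rewrite log_energy_scale, Rabs_mult, (Rabs_right (rpow l q)), (Rmult_assoc (rpow l q))
    by (auto; lra).
  apply Rmult_le_compat_l; [lra|].
  eapply Rle_trans; [apply Rabs_triang|].
  rewrite Rabs_mult, (Rabs_right (cn * rpow (Rabs y) q)) by lra.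
  nra.
Qed.

Lemma log_energy_comb_abs_le q r cn s t y : 0 <= cn -> 0 <= s -> 0 <= t ->
  Rabs (log_energy q r cn (s * Rmax y 0 + t * Rmin y 0))
  <= (rpow s q * (Rabs (r * ln s) + 1) + rpow t q * (Rabs (r * ln t) + 1))
     * (cn * rpow (Rabs y) q + Rabs (log_energy q r cn y)).
Proof.
  intros Hc Hs Ht.
  assert (0 <= cn * rpow (Rabs y) q + Rabs (log_energy q r cn y))
    by (pose proof (Rabs_pos (log_energy q r cn y));
        assert (0 <= cn * rpow (Rabs y) q) by (apply Rmult_le_pos; auto; apply rpow_ge0); lra).
  assert (Ks : 0 <= rpow s q * (Rabs (r * ln s) + 1))
    by (apply Rmult_le_pos; [apply rpow_ge0|pose proof (Rabs_pos (r * ln s)); lra]).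
  assert (Kt : 0 <= rpow t q * (Rabs (r * ln t) + 1))
    by (apply Rmult_le_pos; [apply rpow_ge0|pose proof (Rabs_pos (r * ln t)); lra]).
  destruct (comb_pos_neg_cases s t y) as [[-> _]|[-> _]];
    [pose proof (log_energy_scale_abs_le q r cn s y Hc Hs)
    |pose proof (log_energy_scale_abs_le q r cn t y Hc Ht)]; nra.
Qed.

(* For [|y| <= e] the weight [c <= c0 <= (c0 / b0) b] and [|y|^(q - p) <= e^(q - p)] give the
   first term; for [|y| > e] the logarithm [ln |y|^r] exceeds [1]. *)
Lemma c_pow_le_log_energy q r p cn c0 bn b0 N y : 0 < b0 -> b0 <= bn -> 0 <= cn -> cn <= c0 ->
  1 <= r -> 0 < p -> p < q -> bn * rpow (Rabs y) p <= N ->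
  cn * rpow (Rabs y) q <= rpow (exp 1) (q - p) * c0 / b0 * N + Rabs (log_energy q r cn y).
Proof.
  intros Hb0 Hbn Hc Hc0 Hr Hp Hpq HN.
  pose proof (Rabs_pos (log_energy q r cn y)).
  assert (HK : 0 <= rpow (exp 1) (q - p) * c0 / b0)
    by (apply Rdiv_le_0_compat; [apply Rmult_le_pos; [apply rpow_ge0|]|]; lra).
  assert (HN0 : 0 <= N) by (pose proof (rpow_ge0 (Rabs y) p); nra).
  destruct (Req_EM_T y 0) as [->|Hy].
  { rewrite Rabs_R0, rpow_0, Rmult_0_r; nra. }
  assert (HA : 0 < Rabs y) by (apply Rabs_pos_lt; auto).
  destruct (Rle_dec (Rabs y) (exp 1)) as [Hle|Hgt].
  - pose proof (rpow_ge0 (Rabs y) (q - p)); pose proof (rpow_ge0 (Rabs y) p).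
    assert (Hyp : rpow (Rabs y) p <= N / b0) by (apply Rle_div_r; nra).
    assert (Hyq : rpow (Rabs y) (q - p) <= rpow (exp 1) (q - p)) by (apply rpow_le; lra).
    replace (rpow (Rabs y) q) with (rpow (Rabs y) (q - p) * rpow (Rabs y) p)
      by (rewrite !rpow_pos, <- Rpower_plus by auto; f_equal; ring).
    replace (rpow (exp 1) (q - p) * c0 / b0 * N) with (c0 * (rpow (exp 1) (q - p) * (N / b0)))
      by (field; lra).
    assert (cn * (rpow (Rabs y) (q - p) * rpow (Rabs y) p)
            <= c0 * (rpow (exp 1) (q - p) * (N / b0)))
      by (apply Rmult_le_compat; auto; [apply Rmult_le_pos|apply Rmult_le_compat]; auto).
    lra.
  - assert (Hln : 1 <= ln (rpow (Rabs y) r)).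
    { rewrite ln_rpow by auto.
      assert (1 < ln (Rabs y))
        by (rewrite <- (ln_exp 1) at 1; apply ln_increasing; [apply exp_pos|lra]).
      nra. }
    assert (0 <= cn * rpow (Rabs y) q) by (apply Rmult_le_pos; auto; apply rpow_ge0).
    assert (cn * rpow (Rabs y) q <= Rabs (log_energy q r cn y)).
    { unfold log_energy; destruct (Req_EM_T y 0) as [|_]; [contradiction|].
      rewrite (Rabs_right (cn * rpow (Rabs y) q * ln (rpow (Rabs y) r)))
        by (apply Rle_ge, Rmult_le_pos; lra).
      nra. }
    nra.
Qed.

(** * The pointwise deficit *)

Definition energy_density (p q r : R) (a b c u : Z -> R) (n : Z) : R :=
  / p * normp_term p a b u n + r / q ^ 2 * (c n * rpow (Rabs (u n)) q) - / q * logterm q r c u n.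

Lemma rpow_normE p a b v : 0 < p -> (forall n, 0 <= a n) -> (forall n, 0 <= b n) ->
  ex_zsum (normp_term p a b v) -> rpow (normE p a b v) p = zsum (normp_term p a b v).
Proof.
  intros Hp Ha Hb Hv; unfold normE; apply rpow_rpow_inv; [|exact Hp].
  apply zsum_ge0; [exact Hv|intros; apply normp_term_ge0; auto].
Qed.

Lemma Ifun_zsum p q r a b c v : 0 < p -> (forall n, 0 <= a n) -> (forall n, 0 <= b n) ->
  ex_zsum (normp_term p a b v) -> ex_zsum (fun n => c n * rpow (Rabs (v n)) q) ->
  ex_zsum (logterm q r c v) ->
  Ifun p q r a b c v = zsum (energy_density p q r a b c v).
Proof.
  intros Hp Ha Hb HN HC HL; unfold Ifun, energy_density.
  rewrite rpow_normE by auto.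
  rewrite <- !zsum_scal, <- zsum_plus, <- zsum_minus
    by (try apply ex_zsum_plus; apply ex_zsum_scal; auto).
  reflexivity.
Qed.

Lemma dI_pairing p q r a b c u v : dI p q r a b c u v =
  zsum (pairing_term p a b u v) - zsum (fun n => log_pairing q r (c n) (u n) (v n)).
Proof. reflexivity. Qed.

Section Deficit.

Variables (q r s t : R) (m : nat) (a b c u : Z -> R).
Hypotheses (Hm : (1 <= m)%nat) (Hq : 2 * INR m < q) (Hr : 1 <= r) (Hs : 0 <= s) (Ht : 0 <= t).
Hypotheses (Ha : forall n, 0 < a n) (Hb : forall n, 0 < b n) (Hc : forall n, 0 < c n).

Local Notation p := (2 * INR m).
Local Notation w := (fun n => s * posp u n + t * negp u n).
Local Notation al := ((1 - rpow s q) / q).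
Local Notation bt := ((1 - rpow t q) / q).

Definition deficit (n : Z) : R :=
  energy_density p q r a b c u n - energy_density p q r a b c w n
  - al * (pairing_term p a b u (posp u) n - log_pairing q r (c n) (u n) (posp u n))
  - bt * (pairing_term p a b u (negp u) n - log_pairing q r (c n) (u n) (negp u n))
  - ((1 - rpow s p) / p - al) * normp_term p a b (posp u) n
  - ((1 - rpow t p) / p - bt) * normp_term p a b (negp u) n.

Lemma rpow_even_nonneg x : 0 <= x -> rpow x p = x ^ (2 * m).
Proof. intros Hx; rewrite <- (Rabs_right x) at 1 by lra; apply rpow_abs_even, Hm. Qed.

Lemma deficit_split n : deficit n =
  a n * hom_deficit m s t al bt (fdiff (posp u) n) (fdiff (negp u) n)
  + b n * hom_deficit m s t al bt (posp u n) (negp u n)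
  + (c_density q r (c n) (u n) - c_density q r (c n) (w n)
     + al * log_pairing q r (c n) (u n) (posp u n)
     + bt * log_pairing q r (c n) (u n) (negp u n)).
Proof.
  unfold deficit, energy_density, hom_deficit, c_density.
  rewrite !normp_term_even, !pairing_term_even, !rpow_even_nonneg, fdiff_comb by auto.
  rewrite <- (fdiff_posp_add_negp u n).
  assert (Hsplit : posp u n + negp u n = u n) by apply Rmax_add_Rmin.
  replace (u n ^ (2 * m)) with ((posp u n + negp u n) ^ (2 * m))
    by (rewrite Hsplit; reflexivity).
  replace (u n ^ (2 * m - 1)) with ((posp u n + negp u n) ^ (2 * m - 1))
    by (rewrite Hsplit; reflexivity).
  unfold logterm, log_energy; cbv beta; ring.
Qed.

Lemma one_sub_rpow_div_le_even x : 0 <= x -> (1 - rpow x q) / q <= (1 - x ^ (2 * m)) / p.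
Proof.
  intros Hx; rewrite <- rpow_even_nonneg by exact Hx.
  assert (0 < INR m) by (apply lt_0_INR; lia).
  apply one_sub_rpow_div_antitone; lra.
Qed.

Lemma theta_sum_le_deficit n :
  0 <= a n * theta_sum m s t (fdiff (posp u) n) (fdiff (negp u) n) <= deficit n.
Proof.
  pose proof (Ha n); pose proof (Hb n).
  pose proof (one_sub_rpow_div_le_even s Hs) as Hal.
  pose proof (one_sub_rpow_div_le_even t Ht) as Hbt.
  pose proof (theta_sum_ge0 m s t (fdiff (posp u) n) (fdiff (negp u) n) Hs Ht).
  pose proof (theta_sum_le_hom_deficit m s t al bt (fdiff (posp u) n) (fdiff (negp u) n)
    Hm Hs Ht (fdiff_posp_mul_negp_ge0 u n) Hal Hbt).
  pose proof (theta_sum_ge0 m s t (posp u n) (negp u n) Hs Ht).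
  pose proof (theta_sum_le_hom_deficit m s t al bt (posp u n) (negp u n)
    Hm Hs Ht (Rmax_mul_Rmin_ge0 (u n)) Hal Hbt).
  assert (0 < INR m) by (apply lt_0_INR; lia).
  pose proof (c_density_deficit q r (c n) s t (u n)
    ltac:(lra) ltac:(lra) (Rlt_le _ _ (Hc n)) Hs Ht).
  rewrite deficit_split; split; [apply Rmult_le_pos; lra|].
  assert (0 <= b n * hom_deficit m s t al bt (posp u n) (negp u n)) by (apply Rmult_le_pos; lra).
  assert (a n * theta_sum m s t (fdiff (posp u) n) (fdiff (negp u) n)
          <= a n * hom_deficit m s t al bt (fdiff (posp u) n) (fdiff (negp u) n))
    by (apply Rmult_le_compat_l; lra).
  unfold posp, negp in *; lra.
Qed.

Variables (b0 c0 : R).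
Hypotheses (Hb0 : 0 < b0) (Hbb : forall n, b0 <= b n) (Hcc : forall n, c n <= c0).
Hypothesis Hu : inD p q r a b c u.

Lemma ex_zsum_normp_comb v s' t' : 0 <= s' -> 0 <= t' ->
  (forall k, v k = s' * posp u k + t' * negp u k) -> ex_zsum (normp_term p a b v).
Proof.
  intros Hs' Ht' Hv.
  apply ex_zsum_le with (g := fun n => (s' + t') ^ (2 * m) * normp_term p a b u n);
    [|apply ex_zsum_scal, ex_zsum_of_zsummable, Hu].
  intros n; rewrite Rabs_right by (apply Rle_ge, normp_term_ge0; left; auto).
  apply normp_term_comb_le; auto; left; auto.
Qed.

Lemma ex_zsum_c_pow : ex_zsum (fun n => c n * rpow (Rabs (u n)) q).
Proof.
  assert (0 < INR m) by (apply lt_0_INR; lia).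
  destruct Hu as [HN HL].
  apply ex_zsum_le with (g := fun n => rpow (exp 1) (q - p) * c0 / b0 * normp_term p a b u n
                                      + Rabs (logterm q r c u n));
    [|apply ex_zsum_plus; [apply ex_zsum_scal, ex_zsum_of_zsummable, HN|apply HL]].
  intros n; pose proof (Ha n); pose proof (Hc n).
  rewrite Rabs_right by (apply Rle_ge, Rmult_le_pos; [lra|apply rpow_ge0]).
  apply c_pow_le_log_energy with (bn := b n); auto; try lra.
  unfold normp_term; pose proof (rpow_ge0 (Rabs (fdiff u n)) p); nra.
Qed.

Lemma ex_zsum_c_pow_comb : ex_zsum (fun n => c n * rpow (Rabs (w n)) q).
Proof.
  assert (0 < INR m) by (apply lt_0_INR; lia).
  apply ex_zsum_le with (g := fun n => rpow (s + t) q * (c n * rpow (Rabs (u n)) q));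
    [|apply ex_zsum_scal, ex_zsum_c_pow].
  intros n; pose proof (Hc n).
  rewrite Rabs_right by (apply Rle_ge, Rmult_le_pos; [lra|apply rpow_ge0]).
  apply c_pow_comb_le; lra.
Qed.

Lemma ex_zsum_logterm_comb : ex_zsum (logterm q r c w).
Proof.
  apply ex_zsum_le with (g := fun n =>
    (rpow s q * (Rabs (r * ln s) + 1) + rpow t q * (Rabs (r * ln t) + 1))
    * (c n * rpow (Rabs (u n)) q + Rabs (logterm q r c u n)));
    [|apply ex_zsum_scal, ex_zsum_plus; [apply ex_zsum_c_pow|apply Hu]].
  intros n; apply log_energy_comb_abs_le; auto; left; auto.
Qed.

Lemma ex_zsum_pairing v : (forall n, Rabs (fdiff v n) <= Rabs (fdiff u n)) ->
  (forall n, Rabs (v n) <= Rabs (u n)) -> ex_zsum (pairing_term p a b u v).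
Proof.
  intros Hd Hv; apply ex_zsum_le with (g := normp_term p a b u);
    [|apply ex_zsum_of_zsummable, Hu].
  intros n; apply pairing_term_abs_le; auto; left; auto.
Qed.

Lemma ex_zsum_log_pairing_posp : ex_zsum (fun n => log_pairing q r (c n) (u n) (posp u n)).
Proof.
  apply ex_zsum_le with (g := fun n => Rabs (logterm q r c u n)); [|apply Hu].
  intros n; apply log_pairing_Rmax_abs_le.
Qed.

Lemma ex_zsum_log_pairing_negp : ex_zsum (fun n => log_pairing q r (c n) (u n) (negp u n)).
Proof.
  apply ex_zsum_le with (g := fun n => Rabs (logterm q r c u n)); [|apply Hu].
  intros n; apply log_pairing_Rmin_abs_le.
Qed.

Ltac ex_zsum_combine :=
  repeat first [assumption | apply ex_zsum_minus | apply ex_zsum_plus | apply ex_zsum_scal].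

Lemma zsum_deficit :
  ex_zsum deficit /\
  zsum deficit =
  Ifun p q r a b c u
  - (Ifun p q r a b c w + al * dI p q r a b c u (posp u) + bt * dI p q r a b c u (negp u)
     + ((1 - rpow s p) / p - al) * rpow (normE p a b (posp u)) p
     + ((1 - rpow t p) / p - bt) * rpow (normE p a b (negp u)) p).
Proof.
  assert (0 < INR m) by (apply lt_0_INR; lia).
  assert (Ha_ge0 : forall n, 0 <= a n) by (intros; left; auto).
  assert (Hb_ge0 : forall n, 0 <= b n) by (intros; left; auto).
  pose proof (ex_zsum_of_zsummable _ (proj1 Hu)) as HNu.
  pose proof (ex_zsum_of_zsummable _ (proj2 Hu)) as HLu.
  pose proof ex_zsum_c_pow as HCu.
  pose proof (ex_zsum_normp_comb w s t Hs Ht (fun k => eq_refl)) as HNw.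
  pose proof ex_zsum_c_pow_comb as HCw.
  pose proof ex_zsum_logterm_comb as HLw.
  pose proof (ex_zsum_normp_comb (posp u) 1 0 ltac:(lra) ltac:(lra) ltac:(intros; ring)) as HNp.
  pose proof (ex_zsum_normp_comb (negp u) 0 1 ltac:(lra) ltac:(lra) ltac:(intros; ring)) as HNn.
  pose proof (ex_zsum_pairing (posp u) (fdiff_posp_abs_le u) (posp_abs_le u)) as HAp.
  pose proof (ex_zsum_pairing (negp u) (fdiff_negp_abs_le u) (negp_abs_le u)) as HAn.
  pose proof ex_zsum_log_pairing_posp as HBp.
  pose proof ex_zsum_log_pairing_negp as HBn.
  assert (HEu : ex_zsum (energy_density p q r a b c u))
    by (unfold energy_density; ex_zsum_combine).
  assert (HEw : ex_zsum (energy_density p q r a b c w))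
    by (unfold energy_density; ex_zsum_combine).
  split; [unfold deficit; ex_zsum_combine|].
  rewrite (Ifun_zsum p q r a b c u), (Ifun_zsum p q r a b c w), !rpow_normE by (auto; lra).
  rewrite !dI_pairing; unfold deficit.
  repeat first [rewrite zsum_minus by ex_zsum_combine | rewrite zsum_plus by ex_zsum_combine
               | rewrite zsum_scal].
  ring.
Qed.

Lemma zsum_theta_sum_le_deficit :
  zsum (fun n => a n * theta_sum m s t (fdiff (posp u) n) (fdiff (negp u) n)) <=
  Ifun p q r a b c u
  - (Ifun p q r a b c w + al * dI p q r a b c u (posp u) + bt * dI p q r a b c u (negp u)
     + ((1 - rpow s p) / p - al) * rpow (normE p a b (posp u)) p
     + ((1 - rpow t p) / p - bt) * rpow (normE p a b (negp u)) p).
Proof.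
  destruct zsum_deficit as [Hex <-].
  assert (Hle := theta_sum_le_deficit).
  apply zsum_le; auto; [|intros n; apply Hle].
  apply ex_zsum_le with (g := deficit); auto.
  intros n; destruct (Hle n); rewrite Rabs_right; lra.
Qed.

End Deficit.

Theorem lemma2p2
  (p q r : R) (m : nat) (a b c : Z -> R)
  (Hm : (1 <= m)%nat) (Hp : p = 2 * INR m)
  (H1p : 1 < p) (Hpq : p < q) (Hr : 1 <= r)
  (Ha : forall n, 0 < a n) (Hb : forall n, 0 < b n) (Hc : forall n, 0 < c n)
  (C1 : exists b0, 0 < b0 /\ (forall n, b0 <= b n) /\
        (forall M, exists N : Z, forall n : Z, (N <= Z.abs n)%Z -> M <= b n))
  (C2 : exists c0, 0 < c0 /\ (forall n, c n <= c0) /\ zsummable c)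
  (u : Z -> R) (Hu : inD p q r a b c u) (s t : R) (Hs : 0 <= s) (Ht : 0 <= t) :
  Ifun p q r a b c u >=
    Ifun p q r a b c (fun n => s * posp u n + t * negp u n)
    + (1 - rpow s q) / q * dI p q r a b c u (posp u)
    + (1 - rpow t q) / q * dI p q r a b c u (negp u)
    + ((1 - rpow s p) / p - (1 - rpow s q) / q) * rpow (normE p a b (posp u)) p
    + ((1 - rpow t p) / p - (1 - rpow t q) / q) * rpow (normE p a b (negp u)) p
    + zsum (fun n => a n *
        lsum (seq 1 (m - 1)%nat) (fun i =>
          lsum (seq 1 (i - 1)%nat) (fun j =>
            2 ^ (i - j)%nat
            * Rabs (fdiff (posp u) n ^ (2 * m - (i + j))%nat
                    * fdiff (negp u) n ^ (i + j))
            * Theta m s t i j)))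
  /\ (forall i j : nat, (1 <= i <= m - 1)%nat -> (1 <= j <= i - 1)%nat ->
        0 <= Theta m s t i j).
Proof.
  split; [|intros i j Hi Hj; apply Theta_ge0; auto; lia].
  destruct C1 as [b0 [Hb0 [Hbb _]]], C2 as [c0 [_ [Hcc _]]]; subst p.
  pose proof (zsum_theta_sum_le_deficit q r s t m a b c u Hm Hpq Hr Hs Ht Ha Hb Hc
                b0 c0 Hb0 Hbb Hcc Hu).
  unfold theta_sum in *; lra.
Qed.
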